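(* Let $d_0<d_1<\cdots$ be the increasing enumeration of $\{m\ge1:\ c_m=0\}$ and $z_n=\left(\frac{d_{4n}+1}{4}-n\right)\bmod 2$ for $n\ge0$. For every integer $m\ge2$ there exists a positive integer $n$ with $m\mid n$ and $z_n=1$.
   Context: For $n\in\mathbb{N}$ let $s_2(n)$ be the sum of the binary digits of $n$ and $t_n=s_2(n)\bmod 2$ (the Prouhet–Thue–Morse sequence). Let $F(X)=\sum_{n\ge1}t_nX^n\in\mathbb{F}_2[[X]]$ and let $G(X)=\sum_{n\ge1}c_nX^n\in\mathbb{F}_2[[X]]$ be its compositional inverse, i.e. $F(G(X))=G(F(X))=X$. The $c_n$ are identified with integers in $\{0,1\}$. The sequence $(d_n)$ is indexed from $0$, so $d_0=3$, and $\frac{d_{4n}+1}{4}$ is always an integer. *)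

From HB Require Import structures.
From mathcomp Require Import all_boot all_order all_algebra.
Set Implicit Arguments. Unset Strict Implicit. Unset Printing Implicit Defensive.
Import GRing.Theory.
Local Open Scope ring_scope.

(* s_2(n): sum of the binary digits of n; the i-th binary digit is odd (n / 2^i),
   and digits of index > n vanish since n < 2^(n+1). *)
Definition s2 (n : nat) : nat := (\sum_(i < n.+1) odd (n %/ 2 ^ i))%N.

Definition tm (n : nat) : 'F_2 := (s2 n)%:R.

Definition Ftrunc (N : nat) : {poly 'F_2} :=
  \poly_(i < N.+1) (if i is 0 then 0 else tm i).

Definition Gtrunc (c : nat -> 'F_2) (N : nat) : {poly 'F_2} :=
  \poly_(i < N.+1) (if i is 0 then 0 else c i).

(* G = sum_{n>=1} c_n X^n is the compositional inverse of F in F_2[[X]]: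
   F(G(X)) = X and G(F(X)) = X.  Since F and G have no constant term, the
   coefficient of X^N in the composition only depends on the truncations to
   degree N. *)
Definition is_comp_inverse (c : nat -> 'F_2) : Prop :=
  forall N : nat,
    (Gtrunc c N \Po Ftrunc N)`_N = (N == 1%N)%:R /\
    (Ftrunc N \Po Gtrunc c N)`_N = (N == 1%N)%:R.

Definition is_zero_enum (c : nat -> 'F_2) (d : nat -> nat) : Prop :=
  (forall n, (d n < d n.+1)%N) /\
  (forall m : nat, ((1 <= m)%N /\ c m = 0) <-> exists n, d n = m).

Definition zseq (d : nat -> nat) (n : nat) : nat :=
  (((d (4 * n) + 1) %/ 4 - n) %% 2)%N.

From HB Require Import structures.
From mathcomp Require Import all_boot all_order all_algebra.
From mathcomp Require Import ring zify.
Import GRing.Theory.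

(* Over F_2 the Thue-Morse relations t_{2k} = t_k, t_{2k+1} = 1 + t_k give the
   functional equation (1 + X)^2 F + (1 + X)^3 F^2 = X, which makes
   T = 1 + (1 + X) F a root of Y^4 = (1 + F) Y.  The series
   P = sum_{e in E} X^(4e), E = {numbers with base-4 digits in {0, 2}}, satisfies
   P = (1 + X^8) P(X^4), so S = (1 + F)^3 P(F) is another root of the same
   equation with constant term 1; such roots are unique, so S = T.  This reads
   F G(F) = X F for G with X G = (1 + X)^3 P + 1 + X, i.e. c_m = [(m + 1) div 4 in E].
   The zeros of c thus form the blocks {4a - 1, ..., 4a + 2} with a not in E;
   for u in E with last digit 0 and r = #(E cap [0, u)) even, 4u + 3 is the zero
   d_{4(u - r)}, whence z_{u - r} = 1.  Since u is additive in r over numbers with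
   disjoint binary digits, a pigeonhole argument makes m divide u - r. *)

(** * Truncated power series *)

Section TruncatedCongruence.
Local Open Scope ring_scope.
Context {R : comNzRingType}.
Implicit Types (p q r u D : {poly R}) (n : nat).

Definition eqmodX n p q := take_poly n p = take_poly n q.

Lemma eqmodX_coefP {n p q} : eqmodX n p q <-> forall i, (i < n)%N -> p`_i = q`_i.
Proof.
split=> [pq i lt_in | pq]; last by apply/polyP => i; rewrite !coef_take_poly; case: ifP => // /pq.
by move/(congr1 (fun r => r`_i)): pq; rewrite !coef_take_poly lt_in.
Qed.

Lemma eqmodXP {n p q} : eqmodX n p q <-> exists h, p = q + 'X^n * h.
Proof.
rewrite eqmodX_coefP; split=> [pq | [h ->] i lt_in]; last first.
  by rewrite coefD coefXnM lt_in addr0.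
exists (drop_poly n (p - q)).
have take0 : take_poly n (p - q) = 0.
  apply/polyP => i; rewrite coef_take_poly coef0 coefB.
  by case: ifP => // /pq ->; rewrite subrr.
by rewrite mulrC -[X in q + X]add0r -take0 poly_take_drop addrC subrK.
Qed.

Lemma eqmodX_sym {n p q} : eqmodX n p q -> eqmodX n q p.
Proof. exact: esym. Qed.

Lemma eqmodX_trans {n p q r} : eqmodX n p q -> eqmodX n q r -> eqmodX n p r.
Proof. exact: etrans. Qed.

Lemma eqmodX_leq {m n p q} : (m <= n)%N -> eqmodX n p q -> eqmodX m p q.
Proof.
by move=> le_mn /eqmodX_coefP pq; apply/eqmodX_coefP => i lt_im; apply/pq/(leq_trans lt_im).
Qed.

Lemma eqmodXD {n p q p' q'} :
  eqmodX n p q -> eqmodX n p' q' -> eqmodX n (p + p') (q + q').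
Proof. by rewrite /eqmodX !take_polyD => -> ->. Qed.

Lemma eqmodXM {n p q p' q'} :
  eqmodX n p q -> eqmodX n p' q' -> eqmodX n (p * p') (q * q').
Proof.
move=> /eqmodXP[h ->] /eqmodXP[h' ->]; apply/eqmodXP.
by exists (h * q' + q * h' + 'X^n * h * h'); ring.
Qed.

Lemma eqmodXMl {n} r {p q} : eqmodX n p q -> eqmodX n (r * p) (r * q).
Proof. exact: eqmodXM. Qed.

Lemma eqmodXX {n p q} k : eqmodX n p q -> eqmodX n (p ^+ k) (q ^+ k).
Proof. by move=> pq; elim: k => // k IHk; rewrite !exprS; apply: eqmodXM. Qed.

Lemma eqmodX_expn0 {n} k {D} : eqmodX n D 0 -> eqmodX (k * n) (D ^+ k) 0.
Proof.
move=> /eqmodXP[h]; rewrite add0r => ->; apply/eqmodXP.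
by exists (h ^+ k); rewrite add0r exprMn -exprM mulnC.
Qed.

Lemma poly_mulX_drop1 {r} : r`_0 = 0 -> r = 'X * drop_poly 1 r.
Proof.
move=> r0; rewrite -[LHS](poly_take_drop 1) mulrC expr1.
suff -> : take_poly 1 r = 0 by rewrite add0r.
by apply/polyP => -[|i]; rewrite coef_take_poly coef0.
Qed.

Lemma eqmodX_comp {n p q r} : r`_0 = 0 -> eqmodX n p q -> eqmodX n (p \Po r) (q \Po r).
Proof.
move=> /poly_mulX_drop1 -> /eqmodXP[h ->]; apply/eqmodXP.
rewrite comp_polyD comp_polyM comp_Xn_poly exprMn.
by eexists; rewrite -mulrA.
Qed.

(* [subrXX] factors [(r + X^n h)^i - r^i] through [X^n h]. *)
Lemma eqmodX_compr {n} p {r r'} : eqmodX n r r' -> eqmodX n (p \Po r) (p \Po r').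
Proof.
move=> /eqmodXP[h ->]; apply/eqmodXP; rewrite !comp_polyE.
exists (\sum_(i < size p)
  p`_i *: (h * \sum_(j < i) (r' + 'X^n * h) ^+ (i.-1 - j) * r' ^+ j)).
rewrite mulr_sumr -big_split /=; apply: eq_bigr => i _.
rewrite -scalerAr -scalerDr mulrA; congr (_ *: _).
set s := r' + _; have -> : 'X^n * h = s - r' by rewrite addrAC subrr add0r.
by rewrite -subrXX addrC subrK.
Qed.

Lemma eqmodX_mulX {n p q} : eqmodX n.+1 ('X * p) ('X * q) -> eqmodX n p q.
Proof.
by move/eqmodX_coefP=> pq; apply/eqmodX_coefP => i /(pq i.+1); rewrite !coefXM.
Qed.

Lemma eqmodX_mulr0 {n u D} : u`_0 = 1 -> eqmodX n (u * D) 0 -> eqmodX n D 0.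
Proof.
move=> u0 /eqmodX_coefP uD; apply/eqmodX_coefP; elim/ltn_ind => i IHi lt_in.
move: (uD i lt_in); rewrite coefM big_ord_recl u0 mul1r subn0 coef0.
rewrite big1 ?addr0 // => j _.
have lt_ji : (i - bump 0 j < i)%N by have := ltn_ord j; rewrite /bump; lia.
by rewrite IHi ?coef0 ?mulr0 // (ltn_trans lt_ji).
Qed.

(* If D vanishes to order n >= 1, then D^k, hence u D, hence D vanishes to order kn > n. *)
Lemma eqmodX_root_unique {M k u D} : (1 < k)%N -> u`_0 = 1 ->
  eqmodX M (D ^+ k) (u * D) -> eqmodX 1 D 0 -> eqmodX M D 0.
Proof.
move=> lt1k u0 root D0.
suff prec n : (n <= M)%N -> eqmodX n D 0 by exact: prec.
elim: n => [|[|n] IHn] le_nM; [by rewrite /eqmodX !take_poly0l | exact: D0 |].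
apply: (eqmodX_mulr0 u0); apply: eqmodX_trans (eqmodX_sym (eqmodX_leq le_nM root)) _.
apply: eqmodX_leq (eqmodX_expn0 k (IHn (ltnW le_nM))); nia.
Qed.

Lemma eqmodX1 (f : {poly R}) : eqmodX 1 f (f`_0)%:P.
Proof. by apply/eqmodX_coefP => -[|i] // _; rewrite coefC. Qed.

Lemma eqmodX1_comp (p f : {poly R}) : f`_0 = 0 -> eqmodX 1 (p \Po f) (p`_0)%:P.
Proof.
move=> f0; rewrite -comp_poly0r; apply: eqmodX_compr.
by apply: eqmodX_trans (eqmodX1 f) _; rewrite f0.
Qed.

Lemma coef0_1D (f : {poly R}) : f`_0 = 0 -> (1 + f)`_0 = 1.
Proof. by move=> f0; rewrite coefD coef1 f0 addr0. Qed.

Lemma coef_exprn_diag (f : {poly R}) n : f`_0 = 0 -> (f ^+ n)`_n = f`_1 ^+ n.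
Proof.
move=> f0; rewrite {1}(poly_mulX_drop1 f0) exprMn coefXnM ltnn subnn.
elim: n => [|n IHn]; first by rewrite !expr0 coef1.
by rewrite !exprS coef0M IHn coef_drop_poly.
Qed.

Lemma coef_comp_poly_diag (E : nat -> R) N (f : {poly R}) : f`_0 = 0 -> f`_1 = 1 ->
  (\poly_(i < N.+1) E i \Po f)`_N = \sum_(i < N) E i * (f ^+ i)`_N + E N.
Proof.
move=> f0 f1; rewrite poly_def linear_sum coef_sum big_ord_recr /=.
rewrite comp_polyZ comp_Xn_poly coefZ coef_exprn_diag // f1 expr1n mulr1.
by congr (_ + _); apply: eq_bigr => i _; rewrite comp_polyZ comp_Xn_poly coefZ.
Qed.

Lemma comp_poly_coef_inj (f : nat -> {poly R}) (E E' : nat -> R) :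
  (forall N, (f N)`_0 = 0 /\ (f N)`_1 = 1) ->
  (forall N, (\poly_(i < N.+1) E i \Po f N)`_N = (\poly_(i < N.+1) E' i \Po f N)`_N) ->
  forall N, E N = E' N.
Proof.
move=> f01 compE; elim/ltn_ind => N IHN; have [f0 f1] := f01 N.
move: (compE N); rewrite !coef_comp_poly_diag //.
have -> : \sum_(i < N) E i * (f N ^+ i)`_N = \sum_(i < N) E' i * (f N ^+ i)`_N.
  by apply: eq_bigr => i _; rewrite IHN.
exact: addrI.
Qed.

End TruncatedCongruence.

Section Char2Poly.
Local Open Scope ring_scope.
Local Notation P := {poly 'F_2}.

Lemma pchar2_F2poly : (2 \in [pchar P])%N.
Proof. by rewrite pchar_poly pchar_Fp. Qed.

Lemma F2_expr2 (a : 'F_2) : a ^+ 2 = a.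
Proof. by case: a => -[|[|]] // ?; apply/val_inj. Qed.

Lemma exprD2n (x y : P) k : (x + y) ^+ (2 ^ k) = x ^+ (2 ^ k) + y ^+ (2 ^ k).
Proof. by apply: exprDn_pchar; rewrite pnatX pnatE ?pchar2_F2poly. Qed.

Lemma exprD3 (x y : P) : (x + y) ^+ 3 = x ^+ 3 + x ^+ 2 * y + x * y ^+ 2 + y ^+ 3.
Proof.
have -> : (x + y) ^+ 3 = x ^+ 3 + x ^+ 2 * y + x * y ^+ 2 + y ^+ 3 + (x ^+ 2 * y + x * y ^+ 2) *+ 2.
  by rewrite mulr2n; ring.
by rewrite mulr2n addrr_pchar2 ?pchar2_F2poly // addr0.
Qed.

Lemma comp_poly_expr2 (p r : P) : (p \Po r) ^+ 2 = p \Po r ^+ 2.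
Proof.
rewrite !comp_polyE (big_morph (fun x : P => x ^+ 2) (fun x y => exprD2n x y 1)
  (expr0n _ 2)).
by apply: eq_bigr => i _; rewrite exprZn F2_expr2 -!exprM mulnC.
Qed.

Lemma comp_poly_expr4 (p r : P) : (p \Po r) ^+ 4 = p \Po r ^+ 4.
Proof. by rewrite (_ : 4 = 2 * 2)%N // !exprM !comp_poly_expr2. Qed.

Lemma eqmodX_addr0 n (p q : P) : eqmodX n (p + q) 0 <-> eqmodX n p q.
Proof.
rewrite /eqmodX take_polyD take_poly0r.
split=> [/eqP | ->]; last by rewrite (addrr_pchar2 pchar2_F2poly).
by rewrite addr_eq0 (oppr_pchar2 pchar2_F2poly) => /eqP.
Qed.

End Char2Poly.

(** * The Thue-Morse series *)

Lemma s2_widen {B n} : (n < B)%N -> s2 n = (\sum_(i < B) odd (n %/ 2 ^ i))%N.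
Proof.
move=> lt_nB; rewrite /s2 (big_ord_widen B (fun i => odd (n %/ 2 ^ i) : nat) lt_nB).
rewrite big_mkcond; apply: eq_bigr => i _; case: ifP => // /negbT.
rewrite -leqNgt => le_ni; rewrite divn_small // (leq_trans (ltn_expl n (isT : 1 < 2))) //.
by rewrite leq_exp2l // ltnW // (leq_trans lt_nB).
Qed.

Lemma s2_double q : s2 (2 * q) = s2 q.
Proof.
rewrite (s2_widen (ltnW (ltnSn (2 * q).+1))) big_ord_recl expn0 divn1 oddM add0n.
rewrite (s2_widen (_ : q < (2 * q).+1)%N); last by lia.
by apply: eq_bigr => i _; rewrite lift0 expnS divnMl.
Qed.

Lemma s2_doubleS q : s2 (2 * q).+1 = (s2 q).+1.
Proof.
rewrite (s2_widen (ltnSn (2 * q).+1)) big_ord_recl expn0 divn1 oddS oddM add1n.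
rewrite (s2_widen (_ : q < (2 * q).+1)%N); last by lia.
congr _.+1; apply: eq_bigr => i _; rewrite lift0 expnS divnMA.
by rewrite (_ : (2 * q).+1 %/ 2 = q)%N //; lia.
Qed.

Section ThueMorse.
Local Open Scope ring_scope.
Local Notation P := {poly 'F_2}.

Lemma tm_double q : tm q.*2 = tm q.
Proof. by rewrite /tm -mul2n s2_double. Qed.

Lemma tm_doubleS q : tm q.*2.+1 = 1 + tm q.
Proof. by rewrite /tm -mul2n s2_doubleS mulrS. Qed.

Lemma tm0 : tm 0 = 0.
Proof. by rewrite /tm /s2 big_ord1. Qed.

Lemma tm1 : tm 1 = 1.
Proof. by rewrite -[1%N]/(0.*2.+1) tm_doubleS tm0 addr0. Qed.

Lemma coef_Ftrunc K i : (Ftrunc K)`_i = if (i <= K)%N then tm i else 0.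
Proof. by rewrite coef_poly ltnS; case: i => [|i] //=; rewrite tm0. Qed.

Lemma Ftrunc0 K : (Ftrunc K)`_0 = 0.
Proof. by rewrite coef_Ftrunc leq0n tm0. Qed.

Lemma Ftrunc_eqmodX K : eqmodX K.+1 (Ftrunc K) (Ftrunc K.+1).
Proof.
by apply/eqmodX_coefP => i lt_iK; rewrite !coef_Ftrunc -ltnS lt_iK (ltnW lt_iK).
Qed.

Lemma coef_comp_X2 (p : P) i : (p \Po 'X^2)`_i = if odd i then 0 else p`_i./2.
Proof. by rewrite coef_comp_poly_Xn // dvdn2 -divn2; case: odd. Qed.

Definition geom_X2 (K : nat) : P := \poly_(i < K.+1) (~~ odd i)%:R.

Lemma geom_X2_inv K : eqmodX K.+1 ((1 + 'X^2) * geom_X2 K) 1.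
Proof.
apply/eqmodX_coefP => i lt_iK; rewrite mulrDl mul1r coefD coefXnM coef1 !coef_poly lt_iK.
case: i lt_iK => [|[|i]] lt_iK //=; rewrite ?addr0 // subn2 /= negbK.
by rewrite (ltn_trans _ lt_iK) // addrr_pchar2 ?pchar_Fp.
Qed.

(* t_{2k} = t_k and t_{2k+1} = 1 + t_k, i.e. F = (1 + X) F(X^2) + X/(1 + X^2). *)
Lemma Ftrunc_parity K :
  eqmodX K.+1 (Ftrunc K) ((1 + 'X) * (Ftrunc K \Po 'X^2) + 'X * geom_X2 K).
Proof.
apply/eqmodX_coefP => i; rewrite ltnS => le_iK.
rewrite mulrDl mul1r !coefD !coefXM !coef_comp_X2 /geom_X2 !coef_Ftrunc coef_poly le_iK.
rewrite -(odd_double_half i) in le_iK *; set k := i./2 in le_iK *.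
case: (odd i) le_iK => /= le_iK.
- have le_kK : (k <= K)%N by move: le_iK; rewrite -mul2n; lia.
  rewrite !add0n add1n odd_double half_double le_kK ltnS (ltnW le_iK) /=.
  by rewrite tm_doubleS add0r addrC.
- have le_kK : (k <= K)%N by move: le_iK; rewrite -mul2n; lia.
  rewrite !add0n odd_double half_double le_kK tm_double.
  by case: k {le_iK le_kK} => [|k]; rewrite /= ?addr0 // odd_double /= mulr0n if_same !addr0.
Qed.

Lemma tm_functional K :
  eqmodX K.+1 ((1 + 'X) ^+ 2 * Ftrunc K + (1 + 'X) ^+ 3 * Ftrunc K ^+ 2) 'X.
Proof.
set f := Ftrunc K; set g := (1 + 'X) ^+ 3 * f ^+ 2.
have sqr1X : (1 + 'X : P) ^+ 2 = 1 + 'X^2 by rewrite (exprD2n _ _ 1) expr1n.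
have split_f : (1 + 'X) ^+ 2 * ((1 + 'X) * (f \Po 'X^2) + 'X * geom_X2 K) =
    g + 'X * ((1 + 'X^2) * geom_X2 K).
  by rewrite -comp_poly_expr2 comp_polyXr -sqr1X /g; ring.
have f_eq : eqmodX K.+1 ((1 + 'X) ^+ 2 * f) (g + 'X).
  apply: eqmodX_trans (eqmodXMl _ (Ftrunc_parity K)) _.
  rewrite split_f -[X in eqmodX _ _ (g + X)]mulr1; apply: eqmodXD => //.
  exact: eqmodXMl _ (geom_X2_inv K).
rewrite -[X in eqmodX _ _ X]add0r -(addrr_pchar2 pchar2_F2poly g) addrAC.
exact: eqmodXD f_eq _.
Qed.

Definition tm_cubic_root (K : nat) : P := 1 + (1 + 'X) * Ftrunc K.

(* With y = (1 + X) F, the functional equation reads (1 + X)(y + y^2) = X, and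
   (1 + X)(F + y + y^2 + y^3) = y ((1 + X)(y + y^2) + X) = 0 in characteristic 2. *)
Lemma tm_cubic_rootE K : eqmodX K.+1 (tm_cubic_root K ^+ 3) (1 + Ftrunc K).
Proof.
set f := Ftrunc K; set t := tm_cubic_root K; set y := (1 + 'X) * f.
have fnX : eqmodX K.+1 ((1 + 'X) ^+ 2 * f + (1 + 'X) ^+ 3 * f ^+ 2 + 'X) 0.
  exact/eqmodX_addr0/tm_functional.
have key : (1 + 'X) * (t ^+ 3 + (1 + f)) =
    y * ((1 + 'X) ^+ 2 * f + (1 + 'X) ^+ 3 * f ^+ 2 + 'X).
  have -> : (1 + 'X) * (t ^+ 3 + (1 + f)) =
      y * ((1 + 'X) ^+ 2 * f + (1 + 'X) ^+ 3 * f ^+ 2 + 'X) + (1 + 'X + y) *+ 2.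
    by rewrite /t /tm_cubic_root exprD3 !expr1n !mul1r /y /f; ring.
  by rewrite mulr2n addrr_pchar2 ?pchar2_F2poly ?addr0.
apply/eqmodX_addr0/(eqmodX_mulr0 (u := 1 + 'X)).
  by rewrite coefD coef1 coefX addr0.
by rewrite key -(mulr0 y); apply: eqmodXMl.
Qed.

Lemma tm_cubic_root_expr4 K :
  eqmodX K.+1 (tm_cubic_root K ^+ 4) ((1 + Ftrunc K) * tm_cubic_root K).
Proof. by rewrite exprSr; apply: eqmodXM (tm_cubic_rootE K) _. Qed.

End ThueMorse.

(** * Numbers with even base-4 digits *)

(* [base4_even e]: every base-4 digit of [e] is 0 or 2; the first argument of
   [base4_even_rec] is fuel, enough once it exceeds the number of digits. *)
Fixpoint base4_even_rec (k e : nat) : bool :=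
  if k is k'.+1 then (e == 0) || ~~ odd (e %% 4) && base4_even_rec k' (e %/ 4)
  else true.

Definition base4_even (e : nat) : bool := base4_even_rec e e.

Lemma base4_even_rec_fuel k1 k2 e : e <= k1 -> e <= k2 ->
  base4_even_rec k1 e = base4_even_rec k2 e.
Proof.
elim: k1 k2 e => [|k1 IHk] [|k2] [|e] //= le_ek1 le_ek2.
by congr (_ && _); apply: IHk; lia.
Qed.

Lemma base4_evenE a s : s < 4 -> base4_even (4 * a + s) = ~~ odd s && base4_even a.
Proof.
move=> lt_s4; rewrite /base4_even; case def_e: (4 * a + s) => [|e].
  by have [-> ->] : a = 0 /\ s = 0 by lia.
rewrite /= -def_e (_ : (4 * a + s) %% 4 = s); last by lia.
rewrite (_ : (4 * a + s) %/ 4 = a); last by lia.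
by congr (_ && _); apply: base4_even_rec_fuel; lia.
Qed.

Lemma div4_cases i : exists a s, s < 4 /\ i = 4 * a + s.
Proof. by exists (i %/ 4), (i %% 4); lia. Qed.

(* [base4_spread r] replaces each binary digit b of r by the base-4 digit 2 b;
   it enumerates the [base4_even] numbers in increasing order. *)
Fixpoint base4_spread_rec (k r : nat) : nat :=
  if k is k'.+1 then 4 * base4_spread_rec k' (r %/ 2) + 2 * (r %% 2) else 0.

Definition base4_spread (r : nat) : nat := base4_spread_rec r r.

Lemma base4_spread_rec0 k : base4_spread_rec k 0 = 0.
Proof. by elim: k => //= k ->. Qed.

Lemma base4_spread_rec_fuel k1 k2 r : r <= k1 -> r <= k2 ->
  base4_spread_rec k1 r = base4_spread_rec k2 r.
Proof.
elim: k1 k2 r => [|k1 IHk] [|k2] [|r] le_rk1 le_rk2 //=; rewrite ?base4_spread_rec0 //.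
by rewrite (IHk k2) //; lia.
Qed.

Lemma base4_spreadE r : base4_spread r = 4 * base4_spread (r %/ 2) + 2 * (r %% 2).
Proof.
case: r => [|r] //; rewrite /base4_spread /=.
by rewrite (base4_spread_rec_fuel r (r.+1 %/ 2)) //; lia.
Qed.

Lemma base4_spreadD s a b : a < 2 ^ s ->
  base4_spread (a + 2 ^ s * b) = base4_spread a + 4 ^ s * base4_spread b.
Proof.
elim: s a => [|s IHs] a lt_a.
  have -> : a = 0 by rewrite expn0 in lt_a; lia.
  by rewrite !expn0 !mul1n.
rewrite base4_spreadE (base4_spreadE a) !expnS -mulnA.
have -> : (a + 2 * (2 ^ s * b)) %/ 2 = a %/ 2 + 2 ^ s * b by lia.
have -> : (a + 2 * (2 ^ s * b)) %% 2 = a %% 2 by lia.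
rewrite IHs; first ring.
by rewrite expnS in lt_a; lia.
Qed.

Lemma base4_spread_ge r : 2 * r <= base4_spread r.
Proof.
elim/ltn_ind: r => -[|r] IHr //; rewrite base4_spreadE.
by have := IHr (r.+1 %/ 2); lia.
Qed.

Lemma count_iotaS (P : pred nat) n :
  count P (iota 0 n.+1) = count P (iota 0 n) + P n.
Proof. by rewrite -addn1 iotaD count_cat /= addn0. Qed.

Lemma count_iota_block (P : pred nat) a :
  count P (iota 0 (4 * a.+1)) =
  count P (iota 0 (4 * a)) + P (4 * a) + P (4 * a + 1) + P (4 * a + 2) + P (4 * a + 3).
Proof.
rewrite mulnSr iotaD count_cat /= addn0 add0n.
by rewrite -[(4 * a).+3]addn3 -[(4 * a).+2]addn2 -[(4 * a).+1]addn1 !addnA.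
Qed.

Lemma count_base4_even_mul4 q :
  count base4_even (iota 0 (4 * q)) = 2 * count base4_even (iota 0 q).
Proof.
elim: q => // q IHq; rewrite count_iota_block IHq count_iotaS.
by rewrite -{1}[4 * q]addn0 !base4_evenE //=; lia.
Qed.

Lemma base4_spread_enum r :
  base4_even (base4_spread r) /\ count base4_even (iota 0 (base4_spread r)) = r.
Proof.
elim/ltn_ind: r => -[|r] IHr //; rewrite base4_spreadE.
have [E_half count_half] := IHr _ (ltn_Pdiv (isT : 1 < 2) (ltn0Sn r)).
move: (divn_eq r.+1 2); rewrite modn2; set h := r.+1 %/ 2 in E_half count_half *.
set u := base4_spread h in E_half count_half *.
case: (odd r.+1) => /= eq_r.
  rewrite muln1 base4_evenE // E_half addn2 !count_iotaS count_base4_even_mul4 count_half.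
  rewrite -{1}[4 * u]addn0 -[(4 * u).+1]addn1 !base4_evenE // E_half /=.
  by split=> //; lia.
rewrite muln0 addn0 count_base4_even_mul4 count_half -[4 * u]addn0 base4_evenE // E_half.
by split=> //; lia.
Qed.

(** * The compositional inverse *)

Section ExplicitInverse.
Local Open Scope ring_scope.
Local Notation P := {poly 'F_2}.

Definition Ecoef (j : nat) : 'F_2 := ((4 %| j)%N && base4_even (j %/ 4))%:R.

Definition Epoly (M : nat) : P := \poly_(j < M) Ecoef j.

Definition tm_inv_coef (m : nat) : 'F_2 := (base4_even (m.+1 %/ 4))%:R.

Lemma EcoefE a s : (s < 4)%N -> Ecoef (4 * a + s)%N = ((s == 0)%N && base4_even a)%:R.
Proof.
move=> lt_s4; rewrite /Ecoef (_ : 4 %| 4 * a + s = (s == 0))%N; last by lia.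
by case: eqP => [->|] //; rewrite addn0 mulKn.
Qed.

(* E is the disjoint union of 4E and 4E + 2, so P(X) = (1 + X^8) P(X^4). *)
Lemma Epoly_functional M : eqmodX M (Epoly M) ((1 + 'X^8) * (Epoly M \Po 'X^4)).
Proof.
apply/eqmodX_coefP => i lt_iM.
rewrite mulrDl mul1r coefD coefXnM !coef_comp_poly_Xn // !coef_poly lt_iM.
rewrite (leq_ltn_trans (leq_div i 4) lt_iM) (leq_ltn_trans (leq_div _ 4)); last first.
  exact: leq_ltn_trans (leq_subr 8 i) lt_iM.
have [a [s [lt_s4 ->]]] := div4_cases i; rewrite EcoefE //.
case: s lt_s4 => [|s] lt_s4; last first.
  rewrite (_ : 4 %| 4 * a + s.+1 = false)%N; last by lia.
  rewrite add0r; case: ltnP => // le8.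
  by rewrite (_ : 4 %| 4 * a + s.+1 - 8 = false)%N; last lia.
rewrite addn0 dvdn_mulr // mulKn //.
have [b [t [lt_t4 ->]]] := div4_cases a; rewrite base4_evenE // EcoefE //.
have shift c d : (2 <= c)%N -> (4 * c - 8 = 4 * d)%N ->
    (if (4 * c < 8)%N then 0 else if (4 %| 4 * c - 8)%N then Ecoef ((4 * c - 8) %/ 4)
     else 0) = Ecoef d.
  by move=> le2c eq_cd; rewrite ltnNge -[8%N]/(4 * 2)%N leq_pmul2l // le2c eq_cd dvdn_mulr // mulKn.
case: t lt_t4 => [|[|[|[|]]]] // _.
- case: b => [|b]; first by rewrite addr0.
  by rewrite (shift _ (4 * b + 2)%N) ?EcoefE ?addr0 //; lia.
- case: b => [|b]; first by rewrite addr0.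
  by rewrite (shift _ (4 * b + 3)%N) ?EcoefE ?addr0 //; lia.
- by rewrite (shift _ (4 * b + 0)%N) ?EcoefE ?add0r //; lia.
- by rewrite (shift _ (4 * b + 1)%N) ?EcoefE ?addr0 //; lia.
Qed.

Lemma EcoefD a t : (t < 8)%N ->
  Ecoef (4 * a + t)%N = ((t == 0)%N && base4_even a || (t == 4)%N && base4_even a.+1)%:R.
Proof.
move=> lt_t8; rewrite /Ecoef dvdn_addr ?dvdn_mulr // (mulnC 4%N) divnMDl //.
by case: t lt_t8 => [|[|[|[|[|[|[|[|]]]]]]]] //=; rewrite ?addn0 ?addn1 ?orbF.
Qed.

Lemma Ecoef_window k :
  Ecoef (k + 3)%N + Ecoef (k + 2)%N + Ecoef (k + 1)%N + Ecoef k = (base4_even ((k + 3) %/ 4)%N)%:R.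
Proof.
have [a [s [lt_s4 ->]]] := div4_cases k.
rewrite -!(addnA (4 * a)%N) (mulnC 4%N) divnMDl // mulnC !EcoefD; try lia.
have -> : ((s + 3) %/ 4 = (s != 0))%N by case: s lt_s4 => [|[|[|[|]]]].
by case: s lt_s4 => [|[|[|[|]]]] //= _; rewrite ?add0r ?addr0 ?orbF ?addn0 ?addn1.
Qed.

Lemma Gtrunc_tm_inv_mulX N :
  eqmodX N.+2 ('X * Gtrunc tm_inv_coef N) ((1 + 'X) ^+ 3 * Epoly N.+2 + 1 + 'X).
Proof.
apply/eqmodX_coefP => k lt_kN.
rewrite exprD3 !expr1n !mul1r !mulrDl mul1r.
rewrite !coefD !coefXnM !coefXM coef1 coefX !coef_poly.
have two0 : 1 + 1 = 0 :> 'F_2 by apply: addrr_pchar2; rewrite pchar_Fp.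
have E0 : Ecoef 0 = 1 by [].
have E1 : Ecoef 1 = 0 by [].
have E2 : Ecoef 2 = 0 by [].
case: k lt_kN => [|[|[|k]]] lt_kN /=.
- by rewrite E0 !addr0 two0.
- by rewrite E0 E1 !add0r !addr0 two0.
- by rewrite lt_kN (_ : 1 < N.+1)%N // E1 E2 subnn E0 !add0r !addr0.
have lt_k2N : (k.+2 < N.+1)%N by [].
have -> : (k.+3 - 2 = k.+1)%N by lia.
have -> : (k.+3 - 3 = k)%N by lia.
rewrite lt_k2N lt_kN (ltnW lt_kN) !addr0 /tm_inv_coef /=.
rewrite (ltnW (ltnW lt_kN)) (ltnW (ltnW (ltnW lt_kN))).
by rewrite -[k.+3]addn3 -[k.+2]addn2 -[k.+1]addn1 Ecoef_window.
Qed.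

Lemma Epoly_comp_expr4 M (f : P) : f`_0 = 0 ->
  eqmodX M (((1 + f) ^+ 3 * (Epoly M \Po f)) ^+ 4) ((1 + f) * ((1 + f) ^+ 3 * (Epoly M \Po f))).
Proof.
move=> f0; have funeq := eqmodX_comp f0 (Epoly_functional M).
rewrite comp_polyM comp_polyD -polyC1 comp_polyC polyC1 comp_Xn_poly in funeq.
rewrite -comp_polyA comp_Xn_poly in funeq.
rewrite exprMn -exprM comp_poly_expr4 mulrA -exprS.
have -> : ((1 + f) ^+ (3 * 4) = (1 + f) ^+ 4 * (1 + f ^+ 8))%R.
  by rewrite -(expr1n _ 8) -[8%N]/(2 ^ 3)%N -exprD2n expr1n -exprD.
by rewrite -mulrA; apply/eqmodXMl/eqmodX_sym.
Qed.

Lemma Gtrunc_tm_inv_comp N (f : P) : f`_0 = 0 ->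
  eqmodX N.+2 (f * (Gtrunc tm_inv_coef N \Po f)) ((1 + f) ^+ 3 * (Epoly N.+2 \Po f) + 1 + f).
Proof.
move=> f0; have := eqmodX_comp f0 (Gtrunc_tm_inv_mulX N).
rewrite !comp_polyD !comp_polyM !comp_polyX -polyC1 !comp_polyC polyC1 -expr2 -exprS.
by rewrite comp_polyD comp_polyX -polyC1 comp_polyC polyC1.
Qed.

Lemma Epoly_comp_tm_cubic_root N :
  eqmodX N.+2 ((1 + Ftrunc N.+1) ^+ 3 * (Epoly N.+2 \Po Ftrunc N.+1)) (tm_cubic_root N.+1).
Proof.
set f := Ftrunc N.+1; set S := _ * _; set t := tm_cubic_root N.+1.
have f0 : f`_0 = 0 by exact: Ftrunc0.
apply/eqmodX_addr0/(eqmodX_root_unique (k := 4%N) (u := 1 + f)) => //.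
- exact: coef0_1D.
- rewrite -[4%N]/(2 ^ 2)%N exprD2n mulrDr.
  exact: eqmodXD (Epoly_comp_expr4 _ _ f0) (tm_cubic_root_expr4 N.+1).
have S1 : eqmodX 1 S 1.
  apply: (eqmodX_trans (q := 1 ^+ 3 * 1)); last by rewrite expr1n mulr1.
  apply: eqmodXM; first by apply: eqmodXX; apply: eqmodX_trans (eqmodX1 _) _; rewrite coef0_1D.
  by apply: eqmodX_trans (eqmodX1_comp _ _ f0) _; rewrite coef_poly.
have t1 : eqmodX 1 t 1.
  by apply: eqmodX_trans (eqmodX1 t) _; rewrite coefD coef1 coefM big_ord1 f0 mulr0 addr0.
by rewrite -(addrr_pchar2 pchar2_F2poly 1); apply: eqmodXD.
Qed.

(* F is taken to precision N + 1 so that its factor X can be cancelled. *)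
Lemma Gtrunc_tm_inv_compF N : eqmodX N.+1 (Gtrunc tm_inv_coef N \Po Ftrunc N) 'X.
Proof.
set f := Ftrunc N.+1; set g := Gtrunc tm_inv_coef N.
have f0 : f`_0 = 0 by exact: Ftrunc0.
have fg : eqmodX N.+2 (f * (g \Po f)) ('X * f).
  apply: eqmodX_trans (Gtrunc_tm_inv_comp N _ f0) _.
  have <- : tm_cubic_root N.+1 + 1 + f = 'X * f.
    have -> : tm_cubic_root N.+1 + 1 + f = 'X * f + (1 + f) *+ 2.
      by rewrite /tm_cubic_root -/f; ring.
    by rewrite mulr2n (addrr_pchar2 pchar2_F2poly) addr0.
  by apply: eqmodXD => //; apply: eqmodXD => //; exact: Epoly_comp_tm_cubic_root.
have Xf' := poly_mulX_drop1 f0; set f' := drop_poly 1 f in Xf'.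
have f'0 : f'`_0 = 1 by rewrite coef_drop_poly coef_Ftrunc tm1.
rewrite {1 3}Xf' -!mulrA in fg; move/eqmodX_mulX/eqmodX_addr0: fg.
rewrite ['X * _]mulrC -mulrDr => /(eqmodX_mulr0 f'0)/eqmodX_addr0 gf.
exact: eqmodX_trans (eqmodX_compr g (Ftrunc_eqmodX N)) gf.
Qed.

Lemma coef_comp_Ftrunc (g : {poly 'F_2}) N : (g \Po Ftrunc N)`_N = (g \Po Ftrunc N.+1)`_N.
Proof. exact: (eqmodX_coefP.1 (eqmodX_compr g (Ftrunc_eqmodX N))). Qed.

Lemma comp_inverse_coefE {c : nat -> 'F_2} : is_comp_inverse c ->
  forall m, (0 < m)%N -> c m = tm_inv_coef m.
Proof.
move=> c_inv m m_gt0.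
suff /(_ m) : forall N, (if N is 0 then 0 else c N) = (if N is 0 then 0 else tm_inv_coef N).
  by case: m m_gt0.
(* [Ftrunc 0] has no linear term, hence the shift to [Ftrunc N.+1]. *)
apply: (comp_poly_coef_inj (fun N => Ftrunc N.+1)) => N.
  by rewrite Ftrunc0 coef_Ftrunc ltnS leq0n tm1.
rewrite -[LHS]coef_comp_Ftrunc -[RHS]coef_comp_Ftrunc (c_inv N).1.
by rewrite (eqmodX_coefP.1 (Gtrunc_tm_inv_compF N)) // coefX.
Qed.

End ExplicitInverse.

(** * Zeros of the inverse series *)

Section IncreasingEnumeration.
Context {Z : pred nat} {d : nat -> nat}.
Hypothesis d_incr : forall n, d n < d n.+1.
Hypothesis d_enum : forall m, Z m <-> exists n, d n = m.

Lemma enum_ltn_mono : {mono d : i j / i < j}.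
Proof. exact: leqW_mono (Order.TotalTheory.le_mono (homo_ltn ltn_trans d_incr)). Qed.

Lemma count_iota_gap a b : a <= b -> (forall y, a <= y < b -> ~~ Z y) ->
  count Z (iota 0 b) = count Z (iota 0 a).
Proof.
move=> /subnKC <-; elim: (b - a) => [|k IHk] gap; first by rewrite addn0.
have gap' y : a <= y < a + k -> ~~ Z y by case/andP=> ? ?; apply: gap; lia.
have notZ : ~~ Z (a + k) by apply: gap; lia.
by rewrite addnS count_iotaS (IHk gap') (negbTE notZ) addn0.
Qed.

Lemma count_enum k : count Z (iota 0 (d k)) = k.
Proof.
have notZ y j : d j < y < d j.+1 -> ~~ Z y.
  by case/andP=> lt1 lt2; apply/negP => /d_enum[n dn]; move: lt1 lt2;
    rewrite -dn !enum_ltn_mono; lia.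
elim: k => [|k IHk].
  rewrite (@count_iota_gap 0) // => y /andP[_ lt_y]; apply/negP => /d_enum[n dn].
  by move: lt_y; rewrite -dn enum_ltn_mono.
rewrite (count_iota_gap _ _ (d_incr k)); last by move=> y; apply: notZ.
have Zdk : Z (d k) by apply/d_enum; exists k.
by rewrite count_iotaS IHk Zdk addn1.
Qed.

Lemma enum_count {x} : Z x -> d (count Z (iota 0 x)) = x.
Proof. by case/d_enum => n <-; rewrite count_enum. Qed.

End IncreasingEnumeration.

Definition is_zero_coef (c : nat -> 'F_2) : pred nat := fun y => (0 < y) && (c y == 0%R).

Lemma is_zero_coefE {c : nat -> 'F_2} : (forall m, 0 < m -> c m = tm_inv_coef m) ->
  forall y, is_zero_coef c y = (0 < y) && ~~ base4_even (y.+1 %/ 4).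
Proof.
move=> c_inv [|y] //; rewrite /is_zero_coef c_inv // /tm_inv_coef.
by case: base4_even => //=; rewrite oner_eq0.
Qed.

Lemma count_zero_coef_block {c : nat -> 'F_2} : (forall m, 0 < m -> c m = tm_inv_coef m) ->
  forall b, count (is_zero_coef c) (iota 0 (4 * b + 3))
              + 4 * count base4_even (iota 0 b.+1) = 4 * b + 4.
Proof.
move=> c_inv; elim=> [|b IHb]; first by rewrite /= !is_zero_coefE.
rewrite (_ : 4 * b.+1 + 3 = (4 * b + 3).+4); last by lia.
set a := 4 * b + 3; rewrite !(count_iotaS _ a.+3, count_iotaS _ a.+2, count_iotaS _ a.+1).
rewrite count_iotaS (count_iotaS _ b.+1) !is_zero_coefE // {}/a.
have -> : (4 * b + 3).+1 %/ 4 = b.+1 by lia.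
have -> : (4 * b + 3).+2 %/ 4 = b.+1 by lia.
have -> : (4 * b + 3).+3 %/ 4 = b.+1 by lia.
have -> : (4 * b + 3).+4 %/ 4 = b.+1 by lia.
by move: IHb; case: base4_even => /=; lia.
Qed.

(* With u = base4_spread r and r even, 4u + 3 is a zero of c (the base-4 digits of
   u + 1 end in 1) preceded by exactly 4 (u - r) zeros. *)
Lemma zseq_base4_spread (c : nat -> 'F_2) (d : nat -> nat) r :
  is_comp_inverse c -> is_zero_enum c d -> ~~ odd r ->
  zseq d (base4_spread r - r) = 1.
Proof.
move=> c_inv [d_incr d_enum] even_r; have c_eq := comp_inverse_coefE c_inv.
have [E_u count_u] := base4_spread_enum r; set u := base4_spread r in E_u count_u *.
have u_4 : u = 4 * base4_spread (r %/ 2).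
  by rewrite /u base4_spreadE modn2 (negbTE even_r) muln0 addn0.
have zero_4u3 : is_zero_coef c (4 * u + 3).
  rewrite is_zero_coefE // (_ : (4 * u + 3).+1 %/ 4 = u + 1); last by lia.
  by rewrite addn3 u_4 base4_evenE.
have enum : forall m, is_zero_coef c m <-> exists n, d n = m.
  move=> m; rewrite -d_enum /is_zero_coef; split=> [/andP[m_gt0 /eqP]|[m_gt0 ->]] //.
  by rewrite m_gt0 eqxx.
have := count_zero_coef_block c_eq u; rewrite count_iotaS count_u E_u => count_4u3.
rewrite /zseq (_ : 4 * (u - r) = count (is_zero_coef c) (iota 0 (4 * u + 3))); last by lia.
rewrite (enum_count d_incr enum zero_4u3) (_ : (4 * u + 3 + 1) %/ 4 = u.+1); last by lia.
have r_mod2 : r %% 2 = 0 by rewrite modn2 (negbTE even_r).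
by have := base4_spread_ge r; rewrite -/u; lia.
Qed.

Lemma pigeonhole_mod (A : nat -> nat) {m} : 0 < m ->
  exists i j, i < j <= m /\ A i = A j %[mod m].
Proof.
move=> m_gt0; pose h (k : 'I_m.+1) : 'I_m := Ordinal (ltn_pmod (A k) m_gt0).
have /injectivePn[x [y neq_xy /(congr1 val) /= eq_mod]] : ~~ injectiveb h.
  by apply/injectiveP => /leq_card; rewrite !card_ord ltnn.
case: (ltngtP x y) => [lt_xy | lt_yx | /val_inj eq_xy]; last by rewrite eq_xy eqxx in neq_xy.
- by exists x, y; rewrite lt_xy -ltnS ltn_ord.
- by exists y, x; rewrite lt_yx -ltnS ltn_ord.
Qed.

(* R k = 2 + 4 + ... + 2^k; base4_spread is additive on numbers with disjoint binary
   digits, so by pigeonhole some base4_spread (R j - R i) - (R j - R i) is divisible by m. *)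
Lemma base4_spread_dvd {m} : 0 < m ->
  exists2 r, ~~ odd r & (0 < r) && (m %| base4_spread r - r).
Proof.
move=> m_gt0; pose R k := 2 * (2 ^ k - 1); pose A k := base4_spread (R k) - R k.
have [i [j [/andP[lt_ij _] eq_mod]]] := pigeonhole_mod A m_gt0.
pose r := 2 ^ i.+1 * (2 ^ (j - i) - 1).
have gt1 : 1 < 2 ^ (j - i) by rewrite -{1}(expn0 2) ltn_exp2l // subn_gt0.
have Rj : R j = R i + r.
  rewrite /R /r -(subnKC (ltnW lt_ij)) expnD subnKC ?(ltnW lt_ij) // expnS.
  by have := expn_gt0 2 i; move: (2 ^ i) (2 ^ (j - i)) gt1 => a b; nia.
have spread_Rj : base4_spread (R j) = base4_spread (R i) + base4_spread r.
  rewrite Rj base4_spreadD; last by rewrite /R expnS; have := expn_gt0 2 i; lia.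
  by rewrite -[r]add0n base4_spreadD ?expn_gt0.
exists r; first by rewrite oddM oddX.
rewrite muln_gt0 expn_gt0 subn_gt0 gt1 /=.
have := base4_spread_ge r; have := base4_spread_ge (R i) => ge_Ri ge_r.
have Aj : A j = A i + (base4_spread r - r) by rewrite /A spread_Rj Rj; lia.
by move/eqP: eq_mod; rewrite Aj -{1}[A i]addn0 eqn_modDl mod0n eq_sym.
Qed.

Theorem mainTheorem13 (c : nat -> 'F_2) (d : nat -> nat) :
  is_comp_inverse c -> is_zero_enum c d ->
  forall m : nat, (2 <= m)%N ->
    exists n : nat, (0 < n)%N /\ (m %| n)%N /\ zseq d n = 1%N.
Proof.
move=> c_inv d_enum m m_ge2.
have [r even_r /andP[r_gt0 dvd_m]] := base4_spread_dvd (ltnW m_ge2).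
exists (base4_spread r - r); split; first by have := base4_spread_ge r; lia.
by split=> //; apply: zseq_base4_spread.
Qed.
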